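(* Let $T$ be a rooted tree whose leaves are the keys $[n]$, for each node $v$ let $R_v$ be the set of leaves below $v$, let $p\in[0,1]^n$ with $\sum_ip_i$ an integer, and let $S$ be the random output of the hierarchy summarization procedure applied to $T$ and $p$. Let $Q=R_1\cup\dots\cup R_\ell$ be a union of $\ell$ pairwise disjoint ranges $R_h=R_{v_h}$. Then, with $p(R)=\sum_{i\in R}p_i$, the discrepancy satisfies $\big||S\cap Q|-p(Q)\big|\le\ell$, and it is distributed as the error of a VarOpt sample on a subset of expected size $\mu=\sum_{h=1}^\ell\big(p(R_h)-\lfloor p(R_h)\rfloor\big)\le\ell$: namely, the random variables $Y_h=|S\cap R_h|-\lfloor p(R_h)\rfloor$ take values in $\{0,1\}$, satisfy $\mathbb{E}[Y_h]=p(R_h)-\lfloor p(R_h)\rfloor$, satisfy for every $J\subseteq\{1,\dots,\ell\}$ the bounds $\mathbb{E}[\prod_{h\in J}Y_h]\le\prod_{h\in J}\mathbb{E}[Y_h]$ and $\mathbb{E}[\prod_{h\in J}(1-Y_h)]\le\prod_{h\in J}(1-\mathbb{E}[Y_h])$, and $|S\cap Q|-p(Q)=\sum_{h=1}^\ell Y_h-\mu$.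
   Context: Pair-Aggregate$(p,i,j)$, for indices $i\ne j$ with $0<p_i,p_j<1$, modifies only entries $i,j$ of the current vector $p$: if $p_i+p_j<1$, then with probability $p_i/(p_i+p_j)$ set $(p_i,p_j)\leftarrow(p_i+p_j,0)$ and otherwise $(p_i,p_j)\leftarrow(0,p_i+p_j)$; if $p_i+p_j\ge1$, then with probability $(1-p_j)/(2-p_i-p_j)$ set $(p_i,p_j)\leftarrow(1,p_i+p_j-1)$ and otherwise $(p_i,p_j)\leftarrow(p_i+p_j-1,1)$ (fresh independent randomness each call). The hierarchy summarization procedure: starting from $p$, while at least two indices have current value in $(0,1)$, choose a pair $i\ne j$ of such indices such that no other pair of indices with current values in $(0,1)$ has a lowest common ancestor in $T$ that is a proper descendant of $\mathrm{LCA}(i,j)$ (ties arbitrary), and apply Pair-Aggregate to it; at termination output $S=\{i:p_i=1\}$. A VarOpt sample is a random subset with inclusion probabilities given, fixed size, and the inclusion/exclusion product bounds $\Pr[J\subseteq S]\le\prod_{i\in J}p_i$, $\Pr[J\cap S=\emptyset]\le\prod_{i\in J}(1-p_i)$. *)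

From HB Require Import structures.
From mathcomp Require Import all_boot all_order all_algebra.
Set Implicit Arguments. Unset Strict Implicit. Unset Printing Implicit Defensive.
Import Order.TTheory GRing.Theory Num.Theory.
Local Open Scope ring_scope.

Section HS.
Variables (R : archiRealFieldType) (n : nat).

Definition vec := {ffun 'I_n -> R}.

Definition fracb (x : R) : bool := (0 < x) && (x < 1).

Definition nfrac (q : vec) : nat := #|[set i | fracb (q i)]|.

Definition upd2 (q : vec) (i j : 'I_n) (a b : R) : vec :=
  [ffun k => if k == i then a else if k == j then b else q k].

(* Pair-Aggregate(q,i,j) as a finite distribution: list of (probability, outcome) *)
Definition pair_aggregate (q : vec) (i j : 'I_n) : seq (R * vec) :=
  let pi := q i in let pj := q j in
  if pi + pj < 1 then
    [:: (pi / (pi + pj), upd2 q i j (pi + pj) 0);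
        (1 - pi / (pi + pj), upd2 q i j 0 (pi + pj))]
  else
    [:: ((1 - pj) / (2 - pi - pj), upd2 q i j 1 (pi + pj - 1));
        (1 - (1 - pj) / (2 - pi - pj), upd2 q i j (pi + pj - 1) 1)].

(* Laminar-family representation of a rooted tree with leaf set [n]:
   F is the set of ranges R_v (leaves below v) of the nodes v. *)
Definition tree_family (F : {set {set 'I_n}}) : Prop :=
  [/\ [set: 'I_n] \in F, set0 \notin F, (forall i, [set i] \in F) &
      (forall A B, A \in F -> B \in F ->
         [|| A \subset B, B \subset A | [disjoint A & B]])].

(* leaf set of LCA(i,j): the smallest range containing both i and j *)
Definition lca_range (F : {set {set 'I_n}}) (i j : 'I_n) : {set 'I_n} :=
  \bigcap_(A in F | (i \in A) && (j \in A)) A.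

Definition valid_pair (F : {set {set 'I_n}}) (q : vec) (ij : 'I_n * 'I_n) : Prop :=
  [/\ ij.1 != ij.2, fracb (q ij.1), fracb (q ij.2) &
      forall i' j', i' != j' -> fracb (q i') -> fracb (q j') ->
        ~ (lca_range F i' j' \proper lca_range F ij.1 ij.2)].

(* a tie-breaking rule: a (state-dependent) choice of an admissible pair *)
Definition valid_chooser (F : {set {set 'I_n}}) (choose : vec -> 'I_n * 'I_n) : Prop :=
  forall q, (2 <= nfrac q)%N -> valid_pair F q (choose q).

Fixpoint run (choose : vec -> 'I_n * 'I_n) (k : nat) (q : vec) : seq (R * vec) :=
  match k with
  | O => [:: (1, q)]
  | k'.+1 =>
      if (2 <= nfrac q)%N then
        flatten [seq [seq (w.1 * v.1, v.2) | v <- run choose k' w.2]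
                | w <- pair_aggregate q (choose q).1 (choose q).2]
      else [:: (1, q)]
  end.

(* output distribution of the hierarchy summarization procedure;
   the loop terminates after fewer than n iterations *)
Definition hsumm (choose : vec -> 'I_n * 'I_n) (p : vec) : seq (R * vec) :=
  run choose n p.

Definition out_set (q : vec) : {set 'I_n} := [set i | q i == 1].

Definition expect (D : seq (R * vec)) (f : vec -> R) : R :=
  \sum_(x <- D) x.1 * f x.2.

Definition pmass (p : vec) (A : {set 'I_n}) : R := \sum_(i in A) p i.

End HS.

From HB Require Import structures.
From mathcomp Require Import all_boot all_order all_algebra.
From mathcomp Require Import ring lra zify.
Import Order.TTheory GRing.Theory Num.Theory.
Set Implicit Arguments. Unset Strict Implicit. Unset Printing Implicit Defensive.
Local Open Scope ring_scope.

(* Follow the excess e_h(q) = q(R_h) - floor(p(R_h)) of each range along the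
   procedure.  An admissible pair has no fractional pair below its LCA, so an
   aggregation never splits a range that still holds two fractional entries:
   the mass of such a range is frozen, and once a range holds at most one
   fractional entry its excess is that entry.  Hence every excess stays in
   [0,1], and at termination, when all entries are 0 or 1, it is Y_h.
   Pair-Aggregate preserves the mean of every entry, so the excesses are
   martingales and E[Y_h] = e_h(p).  One aggregation moves at most one excess
   up and at most one other down, by the same centred amount d, so a product of
   excesses (or of their complements) changes in mean by -c E[d^2] with c >= 0:
   these products are supermartingales, which are the VarOpt bounds. *)

Lemma intr_eq0_ltr (R : numDomainType) (z : int) :
  -1 < z%:~R :> R -> z%:~R < 1 :> R -> z = 0.
Proof. rewrite -[-1 : R]/((-1)%:~R) ltr_int ltrz1; lia. Qed.

Lemma fracbNintr (R : archiRealFieldType) (z : int) : ~~ fracb (z%:~R : R).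
Proof. by rewrite /fracb ltr0z ltrz1; apply/negP => /andP[]; lia. Qed.

Lemma eq01_nfracb (R : archiRealFieldType) (x : R) :
  0 <= x <= 1 -> ~~ fracb x -> x = 0 \/ x = 1.
Proof.
rewrite /fracb negb_and -!leNgt => /andP[x0 x1] /orP[] h; [left | right];
  apply/eqP; rewrite eq_le ?h ?x0 ?x1 //.
Qed.

Lemma centered_mean (R : comPzRingType) (w a1 a2 x : R) :
  w * a1 + (1 - w) * a2 = x -> w * (a1 - x) + (1 - w) * (a2 - x) = 0.
Proof. by move=> <-; ring. Qed.

Section PerturbedProduct.
Variables (R : realDomainType) (I : finType).

Lemma prod_shift_card_le1 (P : {set I}) (c : I -> R) (d : R) :
  (#|P| <= 1)%N -> \prod_(h in P) (c h + d) = \prod_(h in P) c h + #|P|%:R * d.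
Proof.
case: (set_0Vmem P) => [-> _ | [x Px] /card_le1P/(_ x Px) Px1].
  by rewrite !big_set0 cards0 mul0r addr0.
have -> : P = [set x] by apply/setP => y; rewrite Px1 inE.
by rewrite !big_set1 cards1 mul1r.
Qed.

Lemma mean_prod_shift_le (J : {set I}) (c s : I -> R) (w d1 d2 : R) :
  0 <= w <= 1 -> w * d1 + (1 - w) * d2 = 0 ->
  {in J, forall h, 0 <= c h} ->
  {in J, forall h, s h \in [:: 0; 1; -1 : R]} ->
  {in J &, forall h h', s h = 1 -> s h' = 1 -> h = h'} ->
  {in J &, forall h h', s h = -1 -> s h' = -1 -> h = h'} ->
  w * \prod_(h in J) (c h + s h * d1) + (1 - w) * \prod_(h in J) (c h + s h * d2)
    <= \prod_(h in J) c h.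
Proof.
move=> /andP[w0 w1] mean0 c0 s3 up1 down1.
set P := [set h in J | s h == 1]; set N := [set h in J | s h == -1].
have P1 : (#|P| <= 1)%N.
  apply/card_le1_eqP => h h'; rewrite !inE => /andP[hJ /eqP sh] /andP[h'J /eqP sh'].
  exact: up1 sh' sh.
have N1 : (#|N| <= 1)%N.
  apply/card_le1_eqP => h h'; rewrite !inE => /andP[hJ /eqP sh] /andP[h'J /eqP sh'].
  exact: down1 sh' sh.
set Z := [set h in J | s h == 0].
have split3 (f : I -> R) :
    \prod_(h in J) f h = \prod_(h in P) f h * \prod_(h in N) f h * \prod_(h in Z) f h.
  rewrite -mulrA (bigID (fun h => s h == 1)) /=.
  rewrite [\prod_(i in J | s i != 1) _](bigID (fun h => s h == -1)) /=.
  congr (_ * (_ * _)); apply: eq_bigl => h; rewrite !inE //;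
    case hJ: (h \in J) => //=; move/s3: hJ; rewrite !inE;
    by case/or3P => /eqP ->; rewrite ?eqxx //; lra.
have shifted d : \prod_(h in J) (c h + s h * d) =
    (\prod_(h in P) c h + #|P|%:R * d) * (\prod_(h in N) c h - #|N|%:R * d)
    * \prod_(h in Z) c h.
  rewrite split3 -prod_shift_card_le1 // -mulrN -prod_shift_card_le1 //.
  congr (_ * _ * _); apply: eq_bigr => h; rewrite inE => /andP[_ /eqP ->].
  - by rewrite mul1r.
  - by rewrite mulN1r.
  - by rewrite mul0r addr0.
(* Since d has mean 0, only the nonpositive term in d^2 survives. *)
rewrite !shifted split3.
set xP := \prod_(h in P) c h; set xN := \prod_(h in N) c h.
set C := \prod_(h in Z) c h; set a := #|P|%:R; set b := #|N|%:R.
have C0 : 0 <= C by apply: prodr_ge0 => h; rewrite inE => /andP[/c0].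
have -> : w * ((xP + a * d1) * (xN - b * d1) * C) +
    (1 - w) * ((xP + a * d2) * (xN - b * d2) * C) =
    xP * xN * C - C * a * b * (w * d1 ^+ 2 + (1 - w) * d2 ^+ 2) +
    C * (a * xN - b * xP) * (w * d1 + (1 - w) * d2) by ring.
rewrite mean0 mulr0 addr0 gerBl.
apply: mulr_ge0; first by rewrite !mulr_ge0 ?ler0n.
by rewrite addr_ge0 // mulr_ge0 ?sqr_ge0 ?subr_ge0.
Qed.

End PerturbedProduct.

Section PairUpdate.
Variables (R : archiRealFieldType) (n : nat).
Implicit Types (q : vec R n) (A B : {set 'I_n}).

Lemma upd2E q i j a b k : upd2 q i j a b k = if k == i then a else if k == j then b else q k.
Proof. by rewrite ffunE. Qed.

Lemma sum_indicator_eq (A : {set 'I_n}) i (c : R) :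
  \sum_(k in A) (k == i)%:R * c = (i \in A)%:R * c.
Proof.
case: (boolP (i \in A)) => iA; last first.
  by rewrite big1 ?mul0r // => k kA; case: eqP => [ki | _]; rewrite ?mul0r //; rewrite -ki kA in iA.
rewrite (bigD1 i) //= eqxx big1 ?addr0 // => k /andP[_ /negbTE ->].
by rewrite mul0r.
Qed.

Lemma pmass_upd2 q i j a A : i != j ->
  pmass (upd2 q i j a (q i + q j - a)) A =
  pmass q A + ((i \in A)%:R - (j \in A)%:R) * (a - q i).
Proof.
move=> ij; rewrite mulrBl -!sum_indicator_eq -sumrB -big_split /=.
apply: eq_bigr => k _; rewrite upd2E.
case: (k =P i) => [-> | _]; rewrite ?(negbTE ij) ?eqxx /=; first ring.
by case: (k =P j) => [-> | _] /=; ring.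
Qed.

Lemma frac_upd2_sub q i j a b (P : pred 'I_n) : fracb (q i) -> fracb (q j) ->
  [set k | P k & fracb (upd2 q i j a b k)] \subset [set k | P k & fracb (q k)].
Proof.
move=> fi fj; apply/subsetP => k; rewrite !inE upd2E => /andP[-> /=].
by case: eqP => [-> | _] //; case: eqP => [-> | _].
Qed.

Lemma nfrac_upd2_lt q i j a b : i != j -> fracb (q i) -> fracb (q j) ->
  ~~ (fracb a && fracb b) -> (nfrac (upd2 q i j a b) < nfrac q)%N.
Proof.
move=> ij fi fj ab; apply: proper_card; apply/properP; split.
  exact: (frac_upd2_sub a b predT fi fj).
by move: ab; rewrite negb_and => /orP[] nf; [exists i | exists j];
  rewrite !inE ?upd2E ?eqxx // eq_sym (negbTE ij).
Qed.

Lemma pmass_01 q B : (forall k, k \in B -> q k = 0 \/ q k = 1) ->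
  pmass q B = #|out_set q :&: B|%:R.
Proof.
move=> B01; rewrite /pmass (big_setID (out_set q)) /= [X in _ + X]big1 ?addr0; last first.
  by move=> k; rewrite !inE => /andP[q1 /B01[] qk //]; rewrite qk eqxx in q1.
rewrite setIC -sum1_card natr_sum; apply: eq_bigr => k.
by rewrite !inE => /andP[/eqP -> _].
Qed.

Lemma pmass_single_frac q A k : (forall i, 0 <= q i <= 1) ->
  {in A &, forall k k', fracb (q k) -> fracb (q k') -> k = k'} ->
  k \in A -> fracb (q k) -> pmass q A = #|out_set q :&: (A :\ k)|%:R + q k.
Proof.
move=> q01 single kA fk; rewrite /pmass (big_setD1 k) //= addrC; congr (_ + _).
apply: pmass_01 => k'; rewrite !inE => /andP[k'k k'A]; apply: eq01_nfracb => //.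
by apply: contra k'k => fk'; rewrite (single _ _ k'A kA fk' fk).
Qed.

Definition unit_split (s a : R) : bool :=
  [&& 0 <= a <= 1, 0 <= s - a <= 1 & ~~ (fracb a && fracb (s - a))].

Variant pair_aggregate_spec q i j : seq (R * vec R n) -> Prop :=
  PairAggregateSpec w a1 a2 of 0 <= w <= 1 & w * a1 + (1 - w) * a2 = q i
    & unit_split (q i + q j) a1 & unit_split (q i + q j) a2 :
  pair_aggregate_spec q i j [:: (w, upd2 q i j a1 (q i + q j - a1));
                                (1 - w, upd2 q i j a2 (q i + q j - a2))].

Lemma pair_aggregateP q i j : fracb (q i) -> fracb (q j) ->
  pair_aggregate_spec q i j (pair_aggregate q i j).
Proof.
rewrite /fracb /pair_aggregate => /andP[i0 i1] /andP[j0 j1].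
case: ltP => s1.
  have s0 : 0 < q i + q j by lra.
  have -> : upd2 q i j (q i + q j) 0 = upd2 q i j (q i + q j) (q i + q j - (q i + q j)).
    by rewrite subrr.
  have -> : upd2 q i j 0 (q i + q j) = upd2 q i j 0 (q i + q j - 0) by rewrite subr0.
  apply: PairAggregateSpec.
  - by rewrite divr_ge0 ?ler_pdivrMr ?mul1r //=; lra.
  - by rewrite mulr0 addr0 divfK ?gt_eqF.
  - by rewrite /unit_split /fracb subrr lexx ltxx andbF /=; lra.
  - by rewrite /unit_split /fracb subr0 lexx ltxx /=; lra.
have t0 : 0 < 2 - q i - q j by lra.
have -> : upd2 q i j (q i + q j - 1) 1 =
          upd2 q i j (q i + q j - 1) (q i + q j - (q i + q j - 1)) by rewrite subKr.
apply: PairAggregateSpec.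
- by rewrite divr_ge0 ?ler_pdivrMr ?mul1r //=; lra.
- have hw : (1 - q j) / (2 - q i - q j) * (2 - q i - q j) = 1 - q j.
    by rewrite divfK // lt0r_neq0.
  set w := _ / _ in hw *; rewrite mulr1.
  by transitivity (w * (2 - q i - q j) + (q i + q j - 1)); [ring | rewrite hw; ring].
- by rewrite /unit_split /fracb ltxx andbF /=; lra.
- by rewrite /unit_split /fracb subKr ltxx andbF /=; lra.
Qed.

End PairUpdate.

Section Laminar.
Variables (R : archiRealFieldType) (n : nat) (F : {set {set 'I_n}}).
Hypothesis HF : tree_family F.

Lemma lca_range_sub A i j : A \in F -> i \in A -> j \in A -> lca_range F i j \subset A.
Proof. by move=> FA iA jA; apply: bigcap_inf; rewrite FA iA jA. Qed.

Lemma mem_lca_range i j : (i \in lca_range F i j) && (j \in lca_range F i j).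
Proof. by apply/andP; split; apply/bigcapP => B /and3P[]. Qed.

Lemma separating_proper_lca_range A i j :
  A \in F -> (i \in A) != (j \in A) -> A \proper lca_range F i j.
Proof.
move=> FA sepA; have [_ _ _ laminar] := HF.
have /andP[i_lca j_lca] := mem_lca_range i j.
apply/properP; split.
  apply/subsetP => x xA; apply/bigcapP => B /and3P[FB iB jB].
  case/or3P: (laminar A B FA FB) => [/subsetP/(_ x xA) // | /subsetP BA | AB].
  - by move: sepA; rewrite (BA i iB) (BA j jB).
  - by move: sepA; rewrite (disjointFl AB iB) (disjointFl AB jB).
by move: sepA; case: (boolP (i \in A)) => iA; case: (boolP (j \in A)) => jA //= _;
  [exists j | exists i].
Qed.

(* Two fractional entries inside a range separating i from j would have a
   strictly lower common ancestor than i and j. *)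
Lemma valid_pair_unsplit (q : vec R n) i j A : valid_pair F q (i, j) -> A \in F ->
  (1 < #|[set k in A | fracb (q k)]|)%N -> (i \in A) = (j \in A).
Proof.
case=> /= _ fi fj lowest FA /card_gt1P[x [y [xA yA xy]]]; rewrite !inE in xA yA.
case/andP: xA => xA fx; case/andP: yA => yA fy.
apply/eqP; apply: contraT => sepA.
have ijA := separating_proper_lca_range FA sepA.
by case: (lowest x y xy fx fy); apply: sub_proper_trans ijA; apply: lca_range_sub.
Qed.

End Laminar.

Section Run.
Variables (R : archiRealFieldType) (n : nat) (choose : vec R n -> 'I_n * 'I_n).
Implicit Types (q : vec R n) (f : vec R n -> R).

Definition chosen_aggregate q := pair_aggregate q (choose q).1 (choose q).2.

Lemma expect_dirac q f : expect [:: (1, q)] f = f q.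
Proof. by rewrite /expect big_cons big_nil mul1r addr0. Qed.

Lemma expect_pair w v (x y : vec R n) f :
  expect [:: (w, x); (v, y)] f = w * f x + v * f y.
Proof. by rewrite /expect !big_cons big_nil addr0. Qed.

Lemma eq_expect_in (D : seq (R * vec R n)) f g :
  (forall x, x \in D -> f x.2 = g x.2) -> expect D f = expect D g.
Proof. by move=> fg; rewrite /expect !big_seq; apply: eq_bigr => x /fg ->. Qed.

Lemma expect_opp (D : seq (R * vec R n)) f : expect D (fun x => - f x) = - expect D f.
Proof. by rewrite /expect -sumrN; apply: eq_bigr => x _; rewrite mulrN. Qed.

Lemma run_stop k q : (nfrac q < 2)%N -> run choose k.+1 q = [:: (1, q)].
Proof. by rewrite ltnNge /= => /negbTE ->. Qed.

Lemma expect_run_step k q f : (2 <= nfrac q)%N ->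
  expect (run choose k.+1 q) f =
  \sum_(x <- chosen_aggregate q) x.1 * expect (run choose k x.2) f.
Proof.
move=> q2; rewrite /= q2 /expect big_flatten big_map; apply: eq_bigr => x _.
by rewrite big_map big_distrr; apply: eq_bigr => y _ /=; rewrite mulrA.
Qed.

Lemma mem_run_step k q y : (2 <= nfrac q)%N -> y \in run choose k.+1 q ->
  exists x z, [/\ x \in chosen_aggregate q, z \in run choose k x.2 & y.2 = z.2].
Proof.
move=> q2; rewrite /= q2 => /flattenP[s /mapP[x x_step ->]] /mapP[z z_run ->].
by exists x, z.
Qed.

Section Progress.
Hypothesis nfrac_step_lt : forall q, (2 <= nfrac q)%N ->
  forall x, x \in chosen_aggregate q -> (nfrac x.2 < nfrac q)%N.

Lemma run_nfrac k q y : y \in run choose k q ->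
  (nfrac y.2 < 2)%N \/ (k + nfrac y.2 <= nfrac q)%N.
Proof.
elim: k q y => [|k IH] q y; first by rewrite inE => /eqP ->; right.
case: (ltnP (nfrac q) 2) => q2 y_run.
  by move: y_run; rewrite run_stop // inE => /eqP ->; left.
have [x [z [x_step z_run ->]]] := mem_run_step q2 y_run.
case: (IH _ _ z_run) => [|z_le]; [by left | right].
by rewrite addSn; apply: leq_ltn_trans z_le (nfrac_step_lt q2 x_step).
Qed.

Lemma nfrac_run_lt2 q y : y \in run choose n q -> (nfrac y.2 < 2)%N.
Proof.
case/run_nfrac => // n_le.
have q_le : (nfrac q <= n)%N by rewrite -[n in (_ <= n)%N]card_ord max_card.
have := leq_trans n_le q_le; lia.
Qed.

End Progress.

Variable Inv : vec R n -> Prop.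
Hypothesis step_inv : forall q, Inv q -> (2 <= nfrac q)%N ->
  forall x, x \in chosen_aggregate q -> 0 <= x.1 /\ Inv x.2.

Lemma run_inv k q y : Inv q -> y \in run choose k q -> Inv y.2.
Proof.
elim: k q y => [|k IH] q y Iq; first by rewrite inE => /eqP ->.
case: (ltnP (nfrac q) 2) => q2 y_run.
  by move: y_run; rewrite run_stop // inE => /eqP ->.
have [x [z [x_step z_run ->]]] := mem_run_step q2 y_run.
have [_ Ix] := step_inv Iq q2 x_step.
exact: IH z_run.
Qed.

Lemma expect_run_le f : (forall q, Inv q -> (2 <= nfrac q)%N ->
    expect (chosen_aggregate q) f <= f q) ->
  forall k q, Inv q -> expect (run choose k q) f <= f q.
Proof.
move=> super; elim=> [|k IH] q Iq; first by rewrite expect_dirac.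
case: (ltnP (nfrac q) 2) => q2; first by rewrite run_stop // expect_dirac.
rewrite expect_run_step //; apply: le_trans (super q Iq q2).
rewrite /expect !big_seq; apply: ler_sum => x x_step.
have [x0 Ix] := step_inv Iq q2 x_step.
by rewrite ler_wpM2l // IH.
Qed.

Lemma expect_run_eq f : (forall q, Inv q -> (2 <= nfrac q)%N ->
    expect (chosen_aggregate q) f = f q) ->
  forall k q, Inv q -> expect (run choose k q) f = f q.
Proof.
move=> mart k q Iq; apply/eqP; rewrite eq_le expect_run_le => [|q' Iq' q2|//].
  by rewrite -lerN2 -!expect_opp expect_run_le // => q' Iq' q2; rewrite expect_opp mart.
by rewrite mart.
Qed.

End Run.

Section Summarization.
Variables (R : archiRealFieldType) (n : nat) (F : {set {set 'I_n}})
  (p : vec R n) (choose : vec R n -> 'I_n * 'I_n)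
  (l : nat) (Rg : 'I_l -> {set 'I_n}).
Hypotheses (HF : tree_family F) (p01 : forall i, 0 <= p i <= 1)
  (p_int : exists k : nat, \sum_i p i = k%:R) (Hchoose : valid_chooser F choose)
  (Rg_tree : forall h, Rg h \in F)
  (Rg_disj : forall h h', h != h' -> [disjoint Rg h & Rg h']).
Implicit Types (q : vec R n) (h : 'I_l).

Definition mass_floor h : R := (Num.floor (pmass p (Rg h)))%:~R.
Definition excess q h := pmass q (Rg h) - mass_floor h.
Definition nfrac_in q (A : {set 'I_n}) := #|[set k in A | fracb (q k)]|.

Definition pair_sign i j h : R := (i \in Rg h)%:R - (j \in Rg h)%:R.

Definition summ_inv q := [/\ forall i, 0 <= q i <= 1,
  pmass q setT = pmass p setT,
  forall h, 0 <= excess q h <= 1 &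
  forall h, (1 < nfrac_in q (Rg h))%N -> pmass q (Rg h) = pmass p (Rg h)].

Lemma summ_inv_init : summ_inv p.
Proof.
split=> // h; rewrite /excess /mass_floor subr_ge0 floor_le /= lerBlDl.
by rewrite -[1]/(1%:~R : R) -intrD ltW // floorD1_gt.
Qed.

Lemma range_uniq k h h' : k \in Rg h -> k \in Rg h' -> h = h'.
Proof.
move=> kh kh'; apply/eqP; apply: contraT => hh'.
by rewrite (disjointFr (Rg_disj hh') kh) in kh'.
Qed.

Lemma pair_sign_mem i j h : pair_sign i j h \in [:: 0; 1; -1].
Proof.
rewrite /pair_sign; case: (i \in Rg h); case: (j \in Rg h);
  by rewrite !inE ?subrr ?subr0 ?sub0r ?eqxx ?orbT.
Qed.

Lemma pair_sign_eq1 i j h : pair_sign i j h = 1 -> i \in Rg h.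
Proof. by rewrite /pair_sign; case: (i \in Rg h); case: (j \in Rg h) => //=; lra. Qed.

Lemma pair_sign_eqN1 i j h : pair_sign i j h = -1 -> j \in Rg h.
Proof. by rewrite /pair_sign; case: (i \in Rg h); case: (j \in Rg h) => //=; lra. Qed.

Lemma excess_upd2 q i j a h : i != j ->
  excess (upd2 q i j a (q i + q j - a)) h = excess q h + pair_sign i j h * (a - q i).
Proof. by move=> ij; rewrite /excess pmass_upd2 //; rewrite /pair_sign; ring. Qed.

Lemma excess_single_frac q h k : summ_inv q -> (nfrac_in q (Rg h) <= 1)%N ->
  k \in Rg h -> fracb (q k) -> excess q h = q k.
Proof.
case=> q01 _ exc01 _ single kA fk.
have := exc01 h; rewrite /excess (pmass_single_frac q01 _ kA fk); last first.
  by move=> x y xA yA fx fy; apply: (card_le1_eqP single); rewrite inE ?xA ?yA.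
set m := #|_|; case/andP: fk => f0 f1 /andP[e0 e1].
have /eqP : m%:Z - Num.floor (pmass p (Rg h)) = 0.
  apply: (intr_eq0_ltr (R := R));
    rewrite intrB -[(m%:Z)%:~R]/(m%:R : R) -/(mass_floor h); lra.
rewrite subr_eq0 => /eqP m_floor.
have -> : m%:R = mass_floor h by rewrite /mass_floor -m_floor.
by rewrite [_ + q k]addrC addrK.
Qed.

Lemma summ_inv_upd2 q i j a : summ_inv q -> valid_pair F q (i, j) ->
  unit_split (q i + q j) a -> summ_inv (upd2 q i j a (q i + q j - a)).
Proof.
set q' := upd2 q i j a _ => Iq V /and3P[a01 b01 _].
have [q01 mass_tot exc01 mass_fixed] := Iq; have [/= ij fi fj _] := V.
have nfrac_le A : (nfrac_in q' A <= nfrac_in q A)%N.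
  exact/subset_leq_card/(frac_upd2_sub _ _ (mem A) fi fj).
have unsplit h : (1 < nfrac_in q (Rg h))%N -> pmass q' (Rg h) = pmass q (Rg h).
  move=> h2; rewrite pmass_upd2 // (valid_pair_unsplit HF V (Rg_tree h) h2).
  by rewrite subrr mul0r addr0.
split.
- by move=> k; rewrite /q' upd2E; case: ifP => _ //; case: ifP.
- by rewrite pmass_upd2 // !inE subrr mul0r addr0.
- move=> h; case: (ltnP 1 (nfrac_in q (Rg h))) => h2.
    by rewrite /excess unsplit //; apply: exc01.
  rewrite excess_upd2 // /pair_sign.
  case iA: (i \in Rg h); case jA: (j \in Rg h) => /=.
  + have : (1 < nfrac_in q (Rg h))%N.
      by apply/card_gt1P; exists i, j; rewrite !inE iA jA fi fj.
    by rewrite ltnNge h2.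
  + by rewrite (excess_single_frac Iq h2 iA fi) subr0 mul1r addrC subrK.
  + rewrite (excess_single_frac Iq h2 jA fj) sub0r mulN1r.
    by have -> : q j + - (a - q i) = q i + q j - a by ring.
  + by rewrite subrr mul0r addr0 exc01.
- by move=> h h2; rewrite unsplit ?mass_fixed //; apply: leq_trans h2 (nfrac_le _).
Qed.

Variant step_spec q : seq (R * vec R n) -> Prop :=
  StepSpec i j w a1 a2 of valid_pair F q (i, j) & 0 <= w <= 1
    & w * a1 + (1 - w) * a2 = q i
    & unit_split (q i + q j) a1 & unit_split (q i + q j) a2 :
  step_spec q [:: (w, upd2 q i j a1 (q i + q j - a1));
                  (1 - w, upd2 q i j a2 (q i + q j - a2))].

Lemma chosen_aggregateP q : (2 <= nfrac q)%N -> step_spec q (chosen_aggregate choose q).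
Proof.
move/Hchoose; rewrite /chosen_aggregate; case: (choose q) => i j V.
have [_ fi fj _] := V.
by case: (pair_aggregateP fi fj) => w a1 a2; apply: StepSpec.
Qed.

Lemma summ_inv_step q : summ_inv q -> (2 <= nfrac q)%N ->
  forall x, x \in chosen_aggregate choose q -> 0 <= x.1 /\ summ_inv x.2.
Proof.
move=> Iq /chosen_aggregateP[i j w a1 a2 V /andP[w0 w1] _ s1 s2] x.
rewrite !inE => /orP[] /eqP -> /=; split; rewrite ?subr_ge0 //; exact: summ_inv_upd2.
Qed.

Lemma nfrac_step_lt q : (2 <= nfrac q)%N ->
  forall x, x \in chosen_aggregate choose q -> (nfrac x.2 < nfrac q)%N.
Proof.
move=> /chosen_aggregateP[i j w a1 a2 [/= ij fi fj _] _ _ /and3P[_ _ s1] /and3P[_ _ s2]] x.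
by rewrite !inE => /orP[] /eqP -> /=; apply: nfrac_upd2_lt.
Qed.

Lemma expect_step_excess q h : (2 <= nfrac q)%N ->
  expect (chosen_aggregate choose q) (excess^~ h) = excess q h.
Proof.
case/chosen_aggregateP => i j w a1 a2 [/= ij _ _ _] _ mean _ _.
rewrite expect_pair !excess_upd2 //.
transitivity (excess q h + pair_sign i j h * (w * (a1 - q i) + (1 - w) * (a2 - q i))).
  by ring.
by rewrite centered_mean // mulr0 addr0.
Qed.

Lemma expect_step_prod_excess (J : {set 'I_l}) q : summ_inv q -> (2 <= nfrac q)%N ->
  expect (chosen_aggregate choose q) (fun x => \prod_(h in J) excess x h)
    <= \prod_(h in J) excess q h.
Proof.
move=> [_ _ exc01 _] /chosen_aggregateP[i j w a1 a2 [/= ij _ _ _] w01 mean _ _].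
rewrite expect_pair; under eq_bigr do rewrite excess_upd2 //.
under [X in _ + _ * X]eq_bigr do rewrite excess_upd2 //.
apply: mean_prod_shift_le => //.
- exact: centered_mean mean.
- by move=> h _; case/andP: (exc01 h).
- by move=> h _; apply: pair_sign_mem.
- by move=> h h' _ _ /pair_sign_eq1 + /pair_sign_eq1; apply: range_uniq.
- by move=> h h' _ _ /pair_sign_eqN1 + /pair_sign_eqN1; apply: range_uniq.
Qed.

Lemma expect_step_prod_deficit (J : {set 'I_l}) q : summ_inv q -> (2 <= nfrac q)%N ->
  expect (chosen_aggregate choose q) (fun x => \prod_(h in J) (1 - excess x h))
    <= \prod_(h in J) (1 - excess q h).
Proof.
move=> [_ _ exc01 _] /chosen_aggregateP[i j w a1 a2 [/= ij _ _ _] w01 mean _ _].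
rewrite expect_pair; under eq_bigr do rewrite excess_upd2 // opprD addrA -mulNr.
under [X in _ + _ * X]eq_bigr do rewrite excess_upd2 // opprD addrA -mulNr.
apply: mean_prod_shift_le => //.
- exact: centered_mean mean.
- by move=> h _; case/andP: (exc01 h) => _; rewrite subr_ge0.
- move=> h _; move: (pair_sign_mem i j h); rewrite !inE.
  by case/or3P => /eqP ->; rewrite ?oppr0 ?opprK eqxx ?orbT.
- move=> h h' _ _ /(canRL opprK)/pair_sign_eqN1 + /(canRL opprK)/pair_sign_eqN1.
  exact: range_uniq.
- by move=> h h' _ _ /oppr_inj/pair_sign_eq1 + /oppr_inj/pair_sign_eq1; apply: range_uniq.
Qed.

Lemma summ_inv_final q : summ_inv q -> (nfrac q < 2)%N -> forall k, q k = 0 \/ q k = 1.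
Proof.
case=> q01 mass_tot _ _ q2 k; apply: eq01_nfracb => //; apply/negP => fk.
have single : {in setT &, forall k k', fracb (q k) -> fracb (q k') -> k = k'}.
  by move=> x y _ _ fx fy; apply: (card_le1_eqP q2); rewrite inE.
have [K sumK] := p_int.
have pK : pmass p setT = K%:R by rewrite -sumK; apply: eq_bigl => i; rewrite inE.
move: mass_tot; rewrite pK (pmass_single_frac q01 single (in_setT k) fk).
set m := #|_| => mK; move: fk.
have -> : q k = (K%:Z - m%:Z)%:~R by rewrite intrB -[(K%:Z)%:~R]/(K%:R : R) -mK; ring.
by rewrite (negbTE (fracbNintr _ _)).
Qed.

Lemma hsumm_final y : y \in hsumm choose p ->
  summ_inv y.2 /\ forall k, y.2 k = 0 \/ y.2 k = 1.
Proof.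
move=> y_run; have Iy := run_inv summ_inv_step summ_inv_init y_run.
split=> //; apply: summ_inv_final => //.
exact: (@nfrac_run_lt2 _ _ _ nfrac_step_lt p y y_run).
Qed.

Lemma excess_01 q h : summ_inv q -> (forall k, q k = 0 \/ q k = 1) ->
  excess q h = 0 \/ excess q h = 1.
Proof.
case=> _ _ exc01 _ q01; apply: eq01_nfracb => //.
rewrite /excess pmass_01 // /mass_floor; set m := #|_|.
by rewrite -[m%:R]/((m%:Z)%:~R : R) -intrB fracbNintr.
Qed.

Lemma card_out_range q h : (forall k, q k = 0 \/ q k = 1) ->
  #|out_set q :&: Rg h|%:R - mass_floor h = excess q h.
Proof. by move=> q01; rewrite /excess pmass_01. Qed.

Lemma sum_excess_bounds q : summ_inv q -> 0 <= \sum_(h < l) excess q h <= l%:R.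
Proof.
case=> _ _ exc01 _; rewrite sumr_ge0 => [|h _]; last by case/andP: (exc01 h).
rewrite -[l in l%:R]card_ord -sumr_const; apply: ler_sum => h _.
by case/andP: (exc01 h).
Qed.

Lemma discrepancy_sum_excess q : (forall k, q k = 0 \/ q k = 1) ->
  #|out_set q :&: \bigcup_(h < l) Rg h|%:R - pmass p (\bigcup_(h < l) Rg h) =
  \sum_(h < l) excess q h - \sum_(h < l) excess p h.
Proof.
move=> q01; rewrite -pmass_01 // /excess !sumrB /pmass.
by rewrite !partition_disjoint_bigcup //; ring.
Qed.

Lemma expect_hsumm_excess h : expect (hsumm choose p) (excess^~ h) = excess p h.
Proof.
apply: (expect_run_eq summ_inv_step) summ_inv_init => q _ q2.
exact: expect_step_excess.
Qed.

Lemma expect_hsumm_prod_excess (J : {set 'I_l}) :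
  expect (hsumm choose p) (fun q => \prod_(h in J) excess q h) <= \prod_(h in J) excess p h.
Proof. exact: (expect_run_le summ_inv_step (expect_step_prod_excess J)) summ_inv_init. Qed.

Lemma expect_hsumm_prod_deficit (J : {set 'I_l}) :
  expect (hsumm choose p) (fun q => \prod_(h in J) (1 - excess q h))
    <= \prod_(h in J) (1 - excess p h).
Proof. exact: (expect_run_le summ_inv_step (expect_step_prod_deficit J)) summ_inv_init. Qed.

End Summarization.

Theorem lemma4 (R : archiRealFieldType) (n : nat) (F : {set {set 'I_n}})
  (p : vec R n) (choose : vec R n -> 'I_n * 'I_n)
  (l : nat) (Rg : 'I_l -> {set 'I_n}) :
  tree_family F ->
  (forall i, 0 <= p i <= 1) ->
  (exists k : nat, \sum_i p i = k%:R) ->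
  valid_chooser F choose ->
  (forall h, Rg h \in F) ->
  (forall h h', h != h' -> [disjoint Rg h & Rg h']) ->
  let D := hsumm choose p in
  let Q := \bigcup_(h < l) Rg h in
  let fl h := (Num.floor (pmass p (Rg h)))%:~R : R in
  let Y h q := (#|out_set q :&: Rg h|%:R - fl h) : R in
  let mu := \sum_(h < l) (pmass p (Rg h) - fl h) in
  [/\ mu <= l%:R,
      (forall w q, (w, q) \in D -> 0 < w ->
         [/\ `|#|out_set q :&: Q|%:R - pmass p Q| <= l%:R,
             #|out_set q :&: Q|%:R - pmass p Q = \sum_(h < l) Y h q - mu &
             forall h, Y h q = 0 \/ Y h q = 1]),
      (forall h, expect D (Y h) = pmass p (Rg h) - fl h) &
      (forall J : {set 'I_l},
         expect D (fun q => \prod_(h in J) Y h q)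
           <= \prod_(h in J) expect D (Y h)
       /\ expect D (fun q => \prod_(h in J) (1 - Y h q))
           <= \prod_(h in J) (1 - expect D (Y h)))].
Proof.
move=> HF p01 p_int Hch Rg_tree Rg_disj D Q fl Y mu.
have final := hsumm_final HF p01 p_int Hch Rg_tree.
have Y_excess y h : y \in D -> Y h y.2 = excess p Rg y.2 h.
  by case/final => _ y01; apply: card_out_range.
have EY h : expect D (Y h) = excess p Rg p h.
  rewrite -(expect_hsumm_excess HF p01 Hch Rg_tree h).
  by apply: eq_expect_in => y /Y_excess.
have mu_bounds := sum_excess_bounds (summ_inv_init Rg p01).
split.
- by case/andP: mu_bounds.
- move=> w q q_D _; have [Iq q01] := final _ q_D.
  have sumY : \sum_(h < l) Y h q = \sum_(h < l) excess p Rg q h.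
    by apply: eq_bigr => h _; apply: (Y_excess (w, q)).
  have disc := discrepancy_sum_excess p Rg_disj q01.
  split; rewrite ?sumY ?disc //.
  + move: mu_bounds (sum_excess_bounds Iq) => /andP[mu0 mul] /andP[s0 sl].
    by rewrite ler_norml; apply/andP; split; lra.
  + by move=> h; rewrite (Y_excess (w, q)) //; apply: excess_01.
- exact: EY.
- move=> J; split; under [X in _ <= X]eq_bigr do rewrite EY.
    rewrite (eq_expect_in (g := fun q => \prod_(h in J) excess p Rg q h)).
      exact: expect_hsumm_prod_excess HF p01 Hch Rg_tree Rg_disj J.
    by move=> y yD; apply: eq_bigr => h _; apply: Y_excess.
  rewrite (eq_expect_in (g := fun q => \prod_(h in J) (1 - excess p Rg q h))).
    exact: expect_hsumm_prod_deficit HF p01 Hch Rg_tree Rg_disj J.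
  by move=> y yD; apply: eq_bigr => h _; rewrite -(Y_excess _ _ yD).
Qed.
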